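(* Let $p\ge 3$ and let $G=(V,E,F)$ be a locally tessellating planar graph without cut locus such that $|v|\le p$ for all $v\in V$. Then for every $v_0\in V$, $\mu(G,v_0)\le \mu(T_p)=\log(p-1)$, where $T_p$ is the $p$-regular tree.
   Context: A planar graph $G=(V,E)$ is embedded in $\mathbb{R}^2$ with edges continuous rectifiable curves without self-intersections; its faces are the closures of the connected components of $\mathbb{R}^2 \setminus \bigcup_{e\in E} e$. $G$ is simple if it has no loops, no multiple edges, no vertices of degree one, every vertex has finite degree, and every bounded open subset of $\mathbb{R}^2$ meets only finitely many faces. The degree $|f|$ of a face is the length of a shortest closed walk in its boundary subgraph meeting all its vertices ($\infty$ if none). A simple planar graph is locally tessellating if: (i) every edge lies in precisely two different faces; (ii) any two faces are disjoint or share precisely a vertex or a path of edges, and if this path has length $>1$ both faces are unbounded; (iii) every face is homeomorphic to a closed disc, to $\mathbb{R}^2$ minus an open disc, or to the closed upper half plane, and its boundary is a path. With $d$ the combinatorial distance, ${\rm Cut}(v)=\{w\in V: d(v,w')\le d(v,w)\text{ for all } w'\text{ adjacent to } w\}$, and $G$ is without cut locus if ${\rm Cut}(v)=\emptyset$ for all $v$. With $\sigma_n=|\{v: d(v_0,v)=n\}|$, the exponential growth is $\mu(G,v_0)=\limsup_{n\to\infty}\frac{\log\sigma_n}{n}$. *)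

(* The plane is R * R for R : realType
   (product topology = usual topology of R^2). *)
From HB Require Import structures.
From mathcomp Require Import all_boot all_order all_algebra finmap.
From mathcomp Require Import all_classical all_reals all_analysis.
From Stdlib Require Import List.

Set Implicit Arguments.
Unset Strict Implicit.
Unset Printing Implicit Defensive.
Import Order.TTheory GRing.Theory Num.Theory numFieldNormedType.Exports.
Local Open Scope classical_set_scope.
Local Open Scope ring_scope.

Section Plane.
Variable R : realType.
Notation P2 := (R * R)%type.

Definition edist (x y : P2) : R :=
  Num.sqrt ((x.1 - y.1) ^+ 2 + (x.2 - y.2) ^+ 2).

Definition rectifiable (gamma : R -> P2) : Prop :=
  exists M : R, forall (k : nat) (t : nat -> R),
    0 <= t 0%N -> t k <= 1 -> (forall i, (i < k)%N -> t i <= t i.+1) ->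
    \sum_(i < k) edist (gamma (t i)) (gamma (t i.+1)) <= M.

Definition unit_itv : set R := `[(0:R), 1]%classic.

Definition arc (a b : P2) (e : set P2) : Prop :=
  exists gamma : R -> P2,
    {within unit_itv, continuous gamma} /\
    (forall s t, unit_itv s -> unit_itv t -> gamma s = gamma t -> s = t) /\
    rectifiable gamma /\
    gamma 0 = a /\ gamma 1 = b /\
    e = gamma @` unit_itv.

Definition bounded2 (A : set P2) : Prop :=
  exists M : R, forall x, A x -> `|x.1| <= M /\ `|x.2| <= M.

Definition homeomorphic (A B : set P2) : Prop :=
  exists (f g : P2 -> P2),
    (forall x, A x -> B (f x)) /\ (forall y, B y -> A (g y)) /\
    (forall x, A x -> g (f x) = x) /\ (forall y, B y -> f (g y) = y) /\
    {within A, continuous f} /\ {within B, continuous g}.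

Definition closed_disc : set P2 := [set x | x.1 ^+ 2 + x.2 ^+ 2 <= 1].
Definition plane_minus_open_disc : set P2 := [set x | 1 <= x.1 ^+ 2 + x.2 ^+ 2].
Definition closed_upper_half_plane : set P2 := [set x | 0 <= x.2].

(* An embedded graph: vertex set V, symmetric adjacency relation adj
   (a relation, so no multiple edges), vertex positions pos and edge images
   edge u v (= edge v u). *)
Record plane_graph := PlaneGraph {
  gV : choiceType;
  gadj : gV -> gV -> Prop;
  gpos : gV -> P2;
  gedge : gV -> gV -> set P2
}.

Variable G : plane_graph.
Local Notation V := (gV G).
Local Notation adj := (@gadj G).
Local Notation pos := (@gpos G).
Local Notation edge := (@gedge G).

Definition is_embedding : Prop :=
  (forall u v, adj u v -> adj v u) /\
  (forall u v, adj u v -> edge u v = edge v u) /\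
  injective pos /\
  (forall u v, adj u v -> arc (pos u) (pos v) (edge u v)) /\
  (forall u v w, adj u v -> edge u v (pos w) -> w = u \/ w = v) /\
  (forall u v u' v', adj u v -> adj u' v' ->
     ~ ((u' = u /\ v' = v) \/ (u' = v /\ v' = u)) ->
     forall x, edge u v x -> edge u' v' x ->
       exists w, x = pos w /\ (w = u \/ w = v) /\ (w = u' \/ w = v')).

Definition union_edges : set P2 := [set x | exists u v, adj u v /\ edge u v x].

Definition is_face (f : set P2) : Prop :=
  exists x, ~ union_edges x /\ f = closure (connected_component (~` union_edges) x).

Definition has_degree (v : V) (d : nat) : Prop :=
  exists l : list V, NoDup l /\ (forall w, adj v w <-> In w l) /\ length l = d.

Definition simple_planar : Prop :=
  is_embedding /\
  (forall v, ~ adj v v) /\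
  (forall v, exists d, has_degree v d) /\
  (forall v, ~ has_degree v 1) /\
  (forall B : set P2, open B -> bounded2 B ->
     finite_set [set f | is_face f /\ (f `&` B) !=set0]).

Definition int_interval (I : set int) : Prop :=
  forall i j k, I i -> I k -> i <= j <= k -> I j.

Definition is_path (I : set int) (w : int -> V) : Prop :=
  int_interval I /\ (exists i, I i /\ I (i + 1)) /\
  {in I &, injective w} /\ (forall i, I i -> I (i + 1) -> adj (w i) (w (i + 1))).

Definition path_set (I : set int) (w : int -> V) : set P2 :=
  [set x | exists i, I i /\ I (i + 1) /\ edge (w i) (w (i + 1)) x].

(* the path has length > 1, i.e. at least three vertices *)
Definition path_long (I : set int) : Prop :=
  exists i, I i /\ I (i + 1) /\ I (i + 2).

Definition is_cycle (k : nat) (w : nat -> V) : Prop :=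
  (3 <= k)%N /\ (forall i j, (i < k)%N -> (j < k)%N -> w i = w j -> i = j) /\
  (forall i, (i < k)%N -> adj (w i) (w ((i.+1) %% k)%N)).

Definition cycle_set (k : nat) (w : nat -> V) : set P2 :=
  [set x | exists i, (i < k)%N /\ edge (w i) (w ((i.+1) %% k)%N) x].

Definition boundary (A : set P2) : set P2 := closure A `\` interior A.

Definition locally_tessellating : Prop :=
  simple_planar /\
  (forall u v, adj u v -> exists f1 f2,
     is_face f1 /\ is_face f2 /\ f1 <> f2 /\ edge u v `<=` f1 /\ edge u v `<=` f2 /\
     forall f, is_face f -> edge u v `<=` f -> f = f1 \/ f = f2) /\
  (forall f1 f2, is_face f1 -> is_face f2 -> f1 <> f2 ->
     f1 `&` f2 = set0 \/
     (exists v, f1 `&` f2 = [set pos v]) \/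
     (exists I w, is_path I w /\ f1 `&` f2 = path_set I w /\
        (path_long I -> ~ bounded2 f1 /\ ~ bounded2 f2))) /\
  (forall f, is_face f ->
     (homeomorphic f closed_disc \/ homeomorphic f plane_minus_open_disc \/
      homeomorphic f closed_upper_half_plane) /\
     ((exists I w, is_path I w /\ boundary f = path_set I w) \/
      (exists k w, is_cycle k w /\ boundary f = cycle_set k w))).

Inductive walk : nat -> V -> V -> Prop :=
| walk0 v : walk 0 v v
| walkS n u v w : adj u v -> walk n v w -> walk n.+1 u w.

Definition is_dist (v w : V) (n : nat) : Prop :=
  walk n v w /\ forall m, (m < n)%N -> ~ walk m v w.

(* d(v, w') <= d(v, w), with d = +oo for unreachable vertices *)
Definition dist_le (v w' w : V) : Prop :=
  forall n, is_dist v w n -> exists m, (m <= n)%N /\ walk m v w'.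

Definition Cut (v : V) : set V := [set w | forall w', adj w w' -> dist_le v w' w].

Definition without_cut_locus : Prop := forall v, Cut v = set0.

Definition sphere (v0 : V) (n : nat) : set V := [set w | is_dist v0 w n].
Definition sigma (v0 : V) (n : nat) : nat := #|` fset_set (sphere v0 n)|.

Definition elog (m : nat) : \bar R :=
  if m == 0%N then -oo%E else (ln (m%:R : R))%:E.

Definition growth (v0 : V) : \bar R :=
  limn_esup (fun n => (elog (sigma v0 n) * (n%:R^-1 : R)%:E)%E).

End Plane.

From HB Require Import structures.
From mathcomp Require Import all_boot all_order all_algebra finmap.
From mathcomp Require Import all_classical all_reals all_analysis.
From Stdlib Require List.
From mathcomp Require Import zify ring.
Import Order.TTheory GRing.Theory Num.Theory.
Local Open Scope classical_set_scope.
Local Open Scope ring_scope.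
Set Implicit Arguments.
Unset Strict Implicit.

(* Every vertex at distance n+1 from v0 is adjacent to a vertex at
   distance n, and a vertex at distance n >= 1 has a neighbour at distance
   n-1, so at most p-1 of its neighbours lie at distance n+1.  Hence
   sigma_n <= (p-1)^(n+1), and (n+1) log(p-1) / n tends to log(p-1). *)

Lemma In_mem (T : eqType) (s : seq T) x : List.In x s <-> x \in s.
Proof.
elim: s => [|a s IH] //=; rewrite inE; split.
- by case=> [->|/IH ->]; rewrite ?eqxx ?orbT.
- by case/orP => [/eqP ->|/IH]; [left|right].
Qed.

Lemma size_flatten_map_le (T : eqType) (S : Type) (f : T -> seq S) (s : seq T) k :
  (forall u, u \in s -> (size (f u) <= k)%N) ->
  (size (flatten (map f s)) <= k * size s)%N.
Proof.
elim: s => [|a s IH] //= h.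
rewrite size_cat mulnS leq_add ?h ?mem_head //.
by apply: IH => u hu; rewrite h // inE hu orbT.
Qed.

Lemma size_filter_lt (T : eqType) (a : pred T) (s : seq T) t :
  t \in s -> ~~ a t -> (size [seq x <- s | a x] < size s)%N.
Proof.
move=> ts Nat; rewrite size_filter -(count_predC a s) -addn1 leq_add2l.
by rewrite -has_count; apply/hasP; exists t.
Qed.

Section Spheres.
Variables (R : realType) (G : plane_graph R).
Local Notation V := (gV G).
Local Notation adj := (@gadj R G).

Lemma walk_rcons n a c b : walk n a c -> adj c b -> walk n.+1 a b.
Proof.
elim=> [v|m u v w huv _ IH] hcb; first exact: walkS hcb (walk0 b).
exact: walkS huv (IH hcb).
Qed.

Lemma walkS_last n a b : walk n.+1 a b -> exists c, walk n a c /\ adj c b.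
Proof.
elim: n a => [|n IH] a h; inversion h as [|m u v w huv hw]; subst.
- by inversion hw; subst; exists a; split => //; constructor.
- by have [c [h1 h2]] := IH _ hw; exists c; split => //; apply: walkS huv h1.
Qed.

Lemma is_dist_uniq (v w : V) n m : is_dist v w n -> is_dist v w m -> n = m.
Proof.
move=> [hn mn] [hm mm]; case: (ltngtP n m) => // h.
- by case: (mm _ h).
- by case: (mn _ h).
Qed.

Lemma is_distS_pred (v w : V) n :
  is_dist v w n.+1 -> exists c, is_dist v c n /\ adj c w.
Proof.
move=> [h hm]; have [c [h1 h2]] := walkS_last h.
exists c; split => //; split => // k hk hw.
exact: (hm k.+1) (walk_rcons hw h2).
Qed.

Variables (p : nat) (nb : V -> seq V) (v0 : V).
Hypothesis adj_sym : forall u v, adj u v -> adj v u.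
Hypothesis nbP : forall v w, adj v w <-> w \in nb v.
Hypothesis size_nb : forall v, (size (nb v) <= p)%N.

Fixpoint sphere_seq n : seq V :=
  if n is n'.+1 then
    flatten [seq [seq w <- nb u | `[< is_dist v0 w n >]] | u <- sphere_seq n']
  else [:: v0].

Lemma sphere_seqS n : sphere_seq n.+1 =
  flatten [seq [seq w <- nb u | `[< is_dist v0 w n.+1 >]] | u <- sphere_seq n].
Proof. by []. Qed.

Lemma mem_sphere_seq {n x} : x \in sphere_seq n <-> is_dist v0 x n.
Proof.
split.
- case: n => [|n] /=.
    by rewrite inE => /eqP ->; split => [|//]; constructor.
  by case/flatten_mapP => u _; rewrite mem_filter => /andP [/asboolP].
- elim: n x => [|n IH] x.
    by move=> [h _]; inversion h; subst; rewrite inE.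
  move=> hx; have [c [hc hcx]] := is_distS_pred hx.
  apply/flatten_mapP; exists c; first exact: IH.
  by rewrite mem_filter; apply/andP; split; [apply/asboolP|apply/nbP].
Qed.

Lemma size_sphere_seqSS n :
  (size (sphere_seq n.+2) <= p.-1 * size (sphere_seq n.+1))%N.
Proof.
rewrite sphere_seqS; apply: size_flatten_map_le.
move=> u /mem_sphere_seq.1 /is_distS_pred [t [ht htu]].
rewrite -ltnS; apply: leq_trans (size_filter_lt (t := t) _ _) _.
- by apply/nbP/adj_sym.
- by apply/negP => /asboolP /(is_dist_uniq ht); lia.
- exact: leq_trans (size_nb u) (leqSpred p).
Qed.

Lemma size_sphere_seq1 : (size (sphere_seq 1) <= p)%N.
Proof. by rewrite /= cats0 size_filter (leq_trans (count_size _ _)). Qed.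

Lemma size_sphere_seq_le n : (3 <= p)%N -> (size (sphere_seq n) <= p.-1 ^ n.+1)%N.
Proof.
move=> p3; case: n => [|n]; first by rewrite /= expn1; lia.
elim: n => [|n IH].
- by apply: leq_trans size_sphere_seq1 _; rewrite expnS expn1; nia.
- apply: leq_trans (size_sphere_seqSS n) _.
  by rewrite (expnS _ n.+2) leq_mul2l IH orbT.
Qed.

Lemma sigma_le n : (3 <= p)%N -> (sigma v0 n <= p.-1 ^ n.+1)%N.
Proof.
move=> p3; apply: leq_trans (size_sphere_seq_le n p3).
have sub : sphere v0 n `<=` [set` sphere_seq n] by move=> x /mem_sphere_seq.2.
have fin : finite_set (sphere v0 n) := sub_finite_set sub (finite_seq _).
apply: (@leq_trans #|` [fset x in sphere_seq n]%fset|).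
  apply: fsubset_leq_card; apply/fsubsetP => x.
  by rewrite in_fset_set // inE => /mem_sphere_seq.2 hx; rewrite inE.
by rewrite card_fseq size_undup.
Qed.

End Spheres.

Lemma degree_le_neighbours (R : realType) (G : plane_graph R) (p : nat) :
  (forall v : gV G, exists d, has_degree v d) ->
  (forall (v : gV G) d, has_degree v d -> (d <= p)%N) ->
  exists nb : gV G -> seq (gV G),
    (forall v w, gadj v w <-> w \in nb v) /\ forall v, (size (nb v) <= p)%N.
Proof.
move=> hdeg hle.
have hl (v : gV G) : exists l : seq (gV G),
    (forall w, gadj v w <-> w \in l) /\ (size l <= p)%N.
  have [d hd] := hdeg v; have [l [_ [hlw hlen]]] := hd.
  exists l; split => [w|]; first exact: iff_trans (hlw w) (In_mem l w).
  by move: (hle _ _ hd); rewrite -hlen.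
have [nb nbP] := choice hl.
by exists nb; split => [v w|v]; have [] := nbP v.
Qed.

Lemma cvg_invn (R : realType) : (fun n : nat => n%:R^-1 : R) @ \oo --> 0.
Proof.
rewrite -(@cvg_shiftS R^o (fun n : nat => (n%:R^-1 : R^o)) (nbhs (0 : R^o))).
exact: cvg_harmonic.
Qed.

Lemma limn_esup_le_lim_ub (R : realType) (u v : (\bar R)^nat) (l : \bar R) :
  (forall n, (u n <= v n)%E) -> v @ \oo --> l -> (limn_esup u <= l)%E.
Proof.
move=> uv vl; rewrite limn_esup_lim -(cvg_lim _ (cvg_esups vl)) //.
apply: lee_lim; [exact: is_cvg_esups|exact: is_cvg_esups|].
apply: nearW => n; apply: ge_ereal_sup => _ [k /= hk <-].
by apply: le_trans (uv k) _; apply: ereal_sup_ubound; exists k.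
Qed.

Lemma elog_divn_le_expn (R : realType) (b m n : nat) :
  (0 < b)%N -> (m <= b ^ n.+1)%N ->
  (elog R m * (n%:R^-1)%:E <= ((1 + n%:R^-1) * ln (b%:R : R))%:E)%E.
Proof.
move=> b0 mb; have lnb0 : 0 <= ln (b%:R : R) by rewrite ln_ge0 // ler1n.
case: n mb => [|n] mb.
  by rewrite invr0 mule0 addr0 mul1r lee_fin.
rewrite /elog; case: eqP => [_|/eqP m0].
  by rewrite mulNyr gtr0_sg ?invr_gt0 ?ltr0n // mul1e leNye.
rewrite -EFinM lee_fin ler_pdivrMr ?ltr0n //.
have -> : (1 + n.+1%:R^-1) * ln (b%:R : R) * n.+1%:R = ln (b%:R : R) *+ n.+2.
  rewrite -[RHS]mulr_natr -[n.+2]addn1 natrD; field.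
  by rewrite addrC natr1 pnatr_eq0.
rewrite -lnXn ?ltr0n // ler_ln ?posrE ?exprn_gt0 ?ltr0n ?lt0n -?natrX ?ler_nat //.
by rewrite -lt0n.
Qed.

Lemma cvge_1D_invn_mul (R : realType) (L : R) :
  (fun n : nat => ((1 + n%:R^-1) * L)%:E) @ \oo --> L%:E.
Proof.
have : (fun n : nat => (1 + n%:R^-1) * L) @ \oo --> (L : R^o).
  have := cvgM (cvgD (cvg_cst (1 : R^o)) (@cvg_invn R)) (cvg_cst (L : R^o)).
  by rewrite addr0 mul1r; apply.
by move=> hL; apply: cvg_EFin => //; exact: nearW.
Qed.

Theorem theorem4 (R : realType) (p : nat) (G : plane_graph R) :
  (3 <= p)%N ->
  locally_tessellating G ->
  without_cut_locus G ->
  (forall (v : gV G) (d : nat), has_degree v d -> (d <= p)%N) ->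
  forall v0 : gV G, (growth v0 <= (ln ((p - 1)%:R : R))%:E)%E.
Proof.
move=> p3 [[[adj_sym _] [_ [hdeg _]]] _] _ hle v0.
have [nb [nbP size_nb]] := degree_le_neighbours hdeg hle.
rewrite /growth; apply: (limn_esup_le_lim_ub _ (@cvge_1D_invn_mul R _)) => n.
apply: elog_divn_le_expn; first by rewrite subn_gt0 (leq_trans _ p3).
by rewrite subn1; apply: sigma_le.
Qed.
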